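(* For every Tychonoff space $X$, the following are equivalent: (1) $C_p(X)\models S_{fin}(\Gamma_f,\Omega_f)$ for every $f\in C_p(X)$; (2) $X\models S_{fin}(\Gamma_F,\Omega)$.
   Context: All spaces are Tychonoff; $C_p(X)$ is $C(X)$ with pointwise convergence topology. For $y$ in a space $Y$: $\Omega_y=\{A\subseteq Y: y\in\overline A\setminus A\}$, $\Gamma_y=\{A\subseteq Y: A$ infinite, $y\notin A$, every neighbourhood of $y$ contains all but finitely many points of $A\}$. Zero-set: $g^{-1}(0)$, $g\in C(X)$; cozero-set: its complement. A cover $\mathcal U$ of $X$ always means $X=\bigcup\mathcal U$, $X\notin\mathcal U$; $\omega$-cover: every finite subset lies in a member; $\gamma$-cover: infinite, each point in all but finitely many members. $\Omega$: open $\omega$-covers. $\Gamma_F$: $\gamma$-covers $\mathcal U$ of $X$ by cozero-sets for which there are zero-sets $F(U)\subseteq U$ ($U\in\mathcal U$) with $\{F(U):U\in\mathcal U\}$ a $\gamma$-cover of $X$. $S_{fin}(\mathcal A,\mathcal B)$: for every sequence $(A_n)$ from $\mathcal A$ there are finite $B_n\subseteq A_n$ with $\bigcup_nB_n\in\mathcal B$. *)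

From Stdlib Require Import Reals Lra List Classical.
Open Scope R_scope.

Record TopSpace := {
  carrier :> Type;
  is_open : (carrier -> Prop) -> Prop;
  open_full : is_open (fun _ => True);
  open_inter : forall U V, is_open U -> is_open V -> is_open (fun x => U x /\ V x);
  open_union : forall (F : (carrier -> Prop) -> Prop),
      (forall U, F U -> is_open U) -> is_open (fun x => exists U, F U /\ U x)
}.

Arguments is_open {t} _.

Definition finite_set {T : Type} (A : T -> Prop) : Prop :=
  exists l : list T, forall a, A a -> In a l.
Definition infinite_set {T : Type} (A : T -> Prop) : Prop := ~ finite_set A.

Definition continuous (X : TopSpace) (f : X -> R) : Prop :=
  forall (x : X) (eps : R), 0 < eps ->
    exists U : X -> Prop, is_open U /\ U x /\ forall y, U y -> Rabs (f y - f x) < eps.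

Definition closed_set (X : TopSpace) (C : X -> Prop) : Prop :=
  is_open (fun x : X => ~ C x).

Definition T1 (X : TopSpace) : Prop :=
  forall x y : X, x <> y -> exists U : X -> Prop, is_open U /\ U x /\ ~ U y.

Definition completely_regular (X : TopSpace) : Prop :=
  forall (C : X -> Prop) (x : X), closed_set X C -> ~ C x ->
    exists f : X -> R, continuous X f /\ (forall y, 0 <= f y <= 1) /\
      f x = 0 /\ forall y, C y -> f y = 1.

Definition tychonoff (X : TopSpace) : Prop := T1 X /\ completely_regular X.

Definition zero_set (X : TopSpace) (Z : X -> Prop) : Prop :=
  exists g : X -> R, continuous X g /\ forall x, Z x <-> g x = 0.
Definition cozero_set (X : TopSpace) (U : X -> Prop) : Prop :=
  exists g : X -> R, continuous X g /\ forall x, U x <-> g x <> 0.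

(** C_p(X): continuous real functions with the topology of pointwise convergence,
    generated by the basic neighbourhoods {g : |g x_i - f x_i| < eps, i}. *)
Definition CX (X : TopSpace) : Type := { f : X -> R | continuous X f }.

Definition basic_nbhd (X : TopSpace) (f : CX X) (l : list X) (eps : R) (g : CX X) : Prop :=
  forall x, In x l -> Rabs (proj1_sig g x - proj1_sig f x) < eps.

Definition cp_open (X : TopSpace) (O : CX X -> Prop) : Prop :=
  forall f, O f -> exists (l : list X) (eps : R), 0 < eps /\
    forall g, basic_nbhd X f l eps g -> O g.

Lemma cp_open_full (X : TopSpace) : cp_open X (fun _ => True).
Proof. intros f _; exists nil, 1; split; [lra | auto]. Qed.

Lemma cp_open_inter (X : TopSpace) U V :
  cp_open X U -> cp_open X V -> cp_open X (fun x => U x /\ V x).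
Proof.
  intros HU HV f [Uf Vf].
  destruct (HU f Uf) as [l1 [e1 [He1 H1]]].
  destruct (HV f Vf) as [l2 [e2 [He2 H2]]].
  exists (l1 ++ l2), (Rmin e1 e2); split.
  - apply Rmin_glb_lt; assumption.
  - intros g Hg; split.
    + apply H1; intros x Hx.
      eapply Rlt_le_trans; [apply Hg; apply in_or_app; auto | apply Rmin_l].
    + apply H2; intros x Hx.
      eapply Rlt_le_trans; [apply Hg; apply in_or_app; auto | apply Rmin_r].
Qed.

Lemma cp_open_union (X : TopSpace) (F : (CX X -> Prop) -> Prop) :
  (forall U, F U -> cp_open X U) -> cp_open X (fun x => exists U, F U /\ U x).
Proof.
  intros HF f [U [FU Uf]].
  destruct (HF U FU f Uf) as [l [e [He H]]].
  exists l, e; split; auto.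
  intros g Hg; exists U; split; auto.
Qed.

Definition Cp (X : TopSpace) : TopSpace :=
  {| carrier := CX X; is_open := cp_open X;
     open_full := cp_open_full X; open_inter := cp_open_inter X;
     open_union := cp_open_union X |}.

Definition in_closure (Y : TopSpace) (A : Y -> Prop) (y : Y) : Prop :=
  forall U : Y -> Prop, is_open U -> U y -> exists a, U a /\ A a.

Definition Omega_pt (Y : TopSpace) (y : Y) (A : Y -> Prop) : Prop :=
  in_closure Y A y /\ ~ A y.

Definition Gamma_pt (Y : TopSpace) (y : Y) (A : Y -> Prop) : Prop :=
  infinite_set A /\ ~ A y /\
  forall U : Y -> Prop, is_open U -> U y -> finite_set (fun a => A a /\ ~ U a).

(** Covers of X (X itself is not a member). *)
Definition is_cover (X : TopSpace) (C : (X -> Prop) -> Prop) : Prop :=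
  (forall x : X, exists U, C U /\ U x) /\ ~ (exists U, C U /\ forall x : X, U x).

Definition omega_cover (X : TopSpace) (C : (X -> Prop) -> Prop) : Prop :=
  is_cover X C /\ forall l : list X, exists U, C U /\ forall x, In x l -> U x.

Definition gamma_cover (X : TopSpace) (C : (X -> Prop) -> Prop) : Prop :=
  is_cover X C /\ infinite_set C /\
  forall x : X, finite_set (fun U => C U /\ ~ U x).

Definition Omega_cov (X : TopSpace) (C : (X -> Prop) -> Prop) : Prop :=
  omega_cover X C /\ forall U, C U -> is_open U.

Definition Gamma_F (X : TopSpace) (C : (X -> Prop) -> Prop) : Prop :=
  gamma_cover X C /\ (forall U, C U -> cozero_set X U) /\
  exists F : (X -> Prop) -> (X -> Prop),
    (forall U, C U -> zero_set X (F U) /\ forall x, F U x -> U x) /\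
    gamma_cover X (fun V => exists U, C U /\ V = F U).

Definition S_fin {T : Type} (A B : (T -> Prop) -> Prop) : Prop :=
  forall S : nat -> T -> Prop, (forall n, A (S n)) ->
    exists Bs : nat -> T -> Prop,
      (forall n, finite_set (Bs n) /\ forall t, Bs n t -> S n t) /\
      B (fun t => exists n, Bs n t).

From Stdlib Require Import Reals List Lra Lia Classical ClassicalEpsilon
  FunctionalExtensionality PropExtensionality.
Open Scope R_scope.

(* (1) => (2): for a Gamma_F-cover with zero-sets F(U) inside U, choose for each zero-set
   Z = F(U) a continuous h_Z vanishing on Z and equal to 1 off U.  Since the zero-sets form a
   gamma-cover, the h_Z converge to 0 in C_p(X); a finite selection accumulating at 0 contains,
   for any finitely many points, some h_Z below 1 at all of them, so the corresponding U contain
   them: the selected U form an omega-cover.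
   (2) => (1): if infinitely many A_n contain a function uniformly 1/(n+1)-close to f, one such
   function per n accumulates at f.  Otherwise, from some M on, the sets
   {x : |h x - f x| < 1/(n+1)} (h in A_n) form Gamma_F-covers, with the closed balls of half the
   radius as zero-sets.  An omega-cover selected from them gives functions close to f on any
   finite set; adding to that set one point outside each member chosen from the first N covers
   forces the selected member to come from a cover of index at least N. *)

Lemma choice_on {A B : Type} (b0 : B) (P : A -> Prop) (R : A -> B -> Prop) :
  (forall a, P a -> exists b, R a b) -> exists g : A -> B, forall a, P a -> R a (g a).
Proof.
  intro H.
  destruct (choice (fun a b => P a -> R a b)) as [g Hg]; [|exists g; exact Hg].
  intro a. destruct (classic (P a)) as [Pa|nPa].
  - destruct (H a Pa) as [b Hb]. exists b; auto.
  - exists b0; contradiction.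
Qed.

Lemma finite_subset {T : Type} (P Q : T -> Prop) :
  (forall a, P a -> Q a) -> finite_set Q -> finite_set P.
Proof. intros H [l Hl]; exists l; auto. Qed.

Lemma finite_image {T U : Type} (P : T -> Prop) (Q : U -> Prop) (m : U -> T) :
  finite_set Q -> (forall a, P a -> exists b, Q b /\ a = m b) -> finite_set P.
Proof.
  intros [l Hl] H; exists (map m l); intros a Pa.
  destruct (H a Pa) as [b [Qb ->]]. apply in_map; auto.
Qed.

Lemma finite_list_union {I T : Type} (l : list I) (P : I -> T -> Prop) :
  (forall i, In i l -> finite_set (P i)) ->
  finite_set (fun a => exists i, In i l /\ P i a).
Proof.
  induction l as [|i l IH]; intros H.
  - exists nil; intros a [i [[] _]].
  - destruct (H i (or_introl eq_refl)) as [l1 H1].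
    destruct IH as [l2 H2]; [intros j Hj; apply H; right; exact Hj|].
    exists (l1 ++ l2); intros a [j [[<-|Hj] Pa]]; apply in_or_app; eauto.
Qed.

Lemma infinite_diff_finite {T : Type} (P Q : T -> Prop) :
  infinite_set P -> finite_set Q -> exists a, P a /\ ~ Q a.
Proof.
  intros HP HQ. apply NNPP; intro N. apply HP.
  apply (finite_subset P Q); [|exact HQ].
  intros a Pa. apply NNPP; intro nQa. apply N; eauto.
Qed.

Lemma finite_witnesses {T Z : Type} (P : T -> Prop) (Q : Z -> T -> Prop) :
  finite_set P -> (forall a, P a -> exists z, Q z a) ->
  exists lz, forall a, P a -> exists z, In z lz /\ Q z a.
Proof.
  intros [l Hl] H.
  enough (Hlist : exists lz, forall a, In a l -> P a -> exists z, In z lz /\ Q z a)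
    by (destruct Hlist as [lz Hlz]; exists lz; auto).
  clear Hl; induction l as [|a l [lz Hlz]].
  - exists nil; intros a [].
  - destruct (classic (P a)) as [Pa|nPa].
    + destruct (H a Pa) as [z Hz]. exists (z :: lz).
      intros b [<-|Hb] Pb; [exists z; split; [left|]; auto|].
      destruct (Hlz b Hb Pb) as [z' [Hz' Qz']]; exists z'; split; [right|]; auto.
    + exists lz; intros b [<-|Hb] Pb; [contradiction|auto].
Qed.

Lemma finite_preimage {I Y Z : Type} (P : I -> Prop) (m : I -> Y)
    (Q : Z -> Y -> Prop) (B : Y -> Prop) :
  finite_set B -> (forall b, B b -> exists z, Q z b) ->
  (forall z, finite_set (fun i => P i /\ Q z (m i))) ->
  finite_set (fun i => P i /\ B (m i)).
Proof.
  intros HB Hwit Hfin.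
  destruct (finite_witnesses B Q HB Hwit) as [lz Hlz].
  apply (finite_subset _ (fun i => exists z, In z lz /\ (P i /\ Q z (m i)))).
  - intros i [Pi Bi]. destruct (Hlz _ Bi) as [z [Hz Qz]]; eauto.
  - apply finite_list_union; auto.
Qed.

Lemma infinite_image {I Y Z : Type} (P : I -> Prop) (m : I -> Y) (Q : Z -> Y -> Prop) :
  infinite_set P -> (forall i, P i -> exists z, Q z (m i)) ->
  (forall z, finite_set (fun i => P i /\ Q z (m i))) ->
  infinite_set (fun y => exists i, P i /\ y = m i).
Proof.
  intros HP Hwit Hfin Himg. apply HP.
  apply (finite_subset _ (fun i => P i /\ (fun y => exists j, P j /\ y = m j) (m i))).
  - intros i Pi; split; eauto.
  - apply (finite_preimage P m Q (fun y => exists j, P j /\ y = m j)); auto.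
    intros y [i [Pi ->]]; auto.
Qed.

Lemma omega_family_tail {T : Type} (V : nat -> (T -> Prop) -> Prop) :
  (forall k, finite_set (V k)) -> (forall k U, V k U -> exists x, ~ U x) ->
  (forall l : list T, exists U, (exists k, V k U) /\ forall x, In x l -> U x) ->
  forall (N : nat) (l : list T),
    exists k U, (N <= k)%nat /\ V k U /\ forall x, In x l -> U x.
Proof.
  intros Vfin Vproper Vomega N l.
  destruct (finite_witnesses (fun U => exists k, In k (seq 0 N) /\ V k U)
              (fun y U => ~ U y)) as [ly Hly].
  { apply finite_list_union; auto. }
  { intros U [k [_ HU]]. exact (Vproper k U HU). }
  destruct (Vomega (l ++ ly)) as [U [[k HU] Hall]].
  exists k, U. split; [|split; [exact HU|intros x Hx; apply Hall, in_or_app; auto]].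
  destruct (Nat.le_gt_cases N k) as [Hk|Hk]; [exact Hk|exfalso].
  destruct (Hly U) as [y [Hy nUy]]; [exists k; split; [apply in_seq; lia|exact HU]|].
  apply nUy, Hall, in_or_app; auto.
Qed.

Lemma list_lower_bound {T : Type} (l : list T) (r : T -> R) :
  (forall x, In x l -> 0 < r x) -> exists d, 0 < d /\ forall x, In x l -> d <= r x.
Proof.
  induction l as [|y l IH]; intro Hpos.
  - exists 1; split; [lra|intros x []].
  - destruct IH as [d [Hd Hdl]]; [intros x Hx; apply Hpos; right; exact Hx|].
    exists (Rmin d (r y)); split.
    + apply Rmin_glb_lt; [exact Hd|apply Hpos; left; reflexivity].
    + intros x [<-|Hx]; [apply Rmin_r|].
      apply (Rle_trans _ d); [apply Rmin_l|auto].
Qed.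

Definition recip_succ (n : nat) : R := / (INR n + 1).

Lemma recip_succ_pos (n : nat) : 0 < recip_succ n.
Proof. apply Rinv_0_lt_compat. pose proof (pos_INR n). lra. Qed.

Lemma recip_succ_antitone (m n : nat) : (m <= n)%nat -> recip_succ n <= recip_succ m.
Proof.
  intro Hmn. apply Rinv_le_contravar; [pose proof (pos_INR m); lra|].
  apply le_INR in Hmn. lra.
Qed.

Lemma recip_succ_lt (eps : R) : 0 < eps -> exists N, recip_succ N < eps.
Proof.
  intro He. destruct (INR_archimed eps 1 He) as [N HN]. exists N.
  pose proof (pos_INR N). unfold recip_succ.
  apply (Rmult_lt_reg_l (INR N + 1)); [lra|]. rewrite Rinv_r by lra. nra.
Qed.

Section Continuity.

Variable X : TopSpace.

Lemma continuous_const (c : R) : continuous X (fun _ => c).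
Proof.
  intros x eps He; exists (fun _ => True); split; [apply open_full|split; [exact I|]].
  intros; rewrite Rminus_diag, Rabs_R0; exact He.
Qed.

Lemma continuous_lipschitz2 (f g phi : X -> R) :
  continuous X f -> continuous X g ->
  (forall x y, Rabs (phi y - phi x) <= Rabs (f y - f x) + Rabs (g y - g x)) ->
  continuous X phi.
Proof.
  intros Hf Hg Hphi x eps He.
  destruct (Hf x (eps / 2)) as [U [OU [Ux HU]]]; [lra|].
  destruct (Hg x (eps / 2)) as [V [OV [Vx HV]]]; [lra|].
  exists (fun y => U y /\ V y); split; [apply open_inter; auto|split; [auto|]].
  intros y [Uy Vy]. specialize (Hphi x y). specialize (HU y Uy). specialize (HV y Vy). lra.
Qed.

Lemma continuous_abs (f : X -> R) : continuous X f -> continuous X (fun y => Rabs (f y)).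
Proof.
  intro Hf. apply (continuous_lipschitz2 f f); auto. intros x y.
  pose proof (Rabs_triang_inv2 (f y) (f x)). pose proof (Rabs_pos (f y - f x)). lra.
Qed.

Lemma continuous_plus (f g : X -> R) :
  continuous X f -> continuous X g -> continuous X (fun y => f y + g y).
Proof.
  intros Hf Hg. apply (continuous_lipschitz2 f g); auto. intros x y.
  replace (f y + g y - (f x + g x)) with ((f y - f x) + (g y - g x)) by ring.
  apply Rabs_triang.
Qed.

Lemma continuous_minus (f g : X -> R) :
  continuous X f -> continuous X g -> continuous X (fun y => f y - g y).
Proof.
  intros Hf Hg. apply (continuous_lipschitz2 f g); auto. intros x y.
  replace (f y - g y - (f x - g x)) with ((f y - f x) + - (g y - g x)) by ring.
  rewrite <- (Rabs_Ropp (g y - g x)). apply Rabs_triang.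
Qed.

Lemma continuous_ext (f g : X -> R) :
  (forall x, f x = g x) -> continuous X g -> continuous X f.
Proof.
  intros E Hg. replace f with g; [exact Hg|].
  apply functional_extensionality; intro x; symmetry; apply E.
Qed.

Lemma continuous_comp (f : X -> R) (phi : R -> R) :
  continuous X f -> (forall x, continuity_pt phi (f x)) ->
  continuous X (fun y => phi (f y)).
Proof.
  intros Hf Hphi x eps He.
  destruct (Hphi x eps He) as [d [Hd Hphid]].
  destruct (Hf x d Hd) as [U [OU [Ux HU]]].
  exists U; repeat split; auto. intros y Uy.
  destruct (Req_dec (f y) (f x)) as [E|NE].
  - rewrite E, Rminus_diag, Rabs_R0; exact He.
  - apply (Hphid (f y)). split; [split; [exact I|auto]|exact (HU y Uy)].
Qed.

Lemma continuous_mult (f g : X -> R) :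
  continuous X f -> continuous X g -> continuous X (fun y => f y * g y).
Proof.
  intros Hf Hg.
  assert (Hsq : forall h, continuous X h -> continuous X (fun y => h y * h y)).
  { intros h Hh. apply (continuous_comp h (fun t => id t * id t)); [exact Hh|].
    intro x. apply continuity_pt_mult; apply derivable_continuous_pt, derivable_pt_id. }
  (* polarisation: f g = ((f + g)^2 - (f - g)^2) / 4 *)
  apply (continuous_ext _ (fun y => ((f y + g y) * (f y + g y) - (f y - g y) * (f y - g y)) / 4)).
  { intro; field. }
  apply (continuous_lipschitz2 (fun y => (f y + g y) * (f y + g y))
                                (fun y => (f y - g y) * (f y - g y))).
  - apply Hsq, continuous_plus; assumption.
  - apply Hsq, continuous_minus; assumption.
  - intros x y. unfold Rabs; repeat destruct Rcase_abs; lra.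
Qed.

Lemma continuous_inv (f : X -> R) :
  continuous X f -> (forall x, f x <> 0) -> continuous X (fun y => / f y).
Proof.
  intros Hf Hnz. apply (continuous_comp f (fun t => / id t)); [exact Hf|].
  intro x. apply continuity_pt_inv; [apply derivable_continuous_pt, derivable_pt_id|apply Hnz].
Qed.

Lemma cozero_set_open (U : X -> Prop) : cozero_set X U -> is_open U.
Proof.
  intros [g [Hg HU]].
  replace U with (fun x => exists V, (is_open V /\ forall y, V y -> U y) /\ V x).
  - apply open_union. intros V [OV _]; exact OV.
  - apply functional_extensionality; intro x; apply propositional_extensionality; split.
    + intros [V [[_ HV] Vx]]; auto.
    + intro Ux. assert (Hgx : g x <> 0) by (apply HU; exact Ux).
      destruct (Hg x (Rabs (g x))) as [V [OV [Vx HV]]]; [apply Rabs_pos_lt; exact Hgx|].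
      exists V; repeat split; auto. intros y Vy. apply HU. intro Hgy.
      specialize (HV y Vy). rewrite Hgy, Rminus_0_l, Rabs_Ropp in HV. lra.
Qed.

Lemma zero_cozero_separation (Z U : X -> Prop) :
  zero_set X Z -> cozero_set X U -> (forall x, Z x -> U x) ->
  exists h : CX X, (forall x, Z x -> proj1_sig h x = 0) /\
                   (forall x, ~ U x -> proj1_sig h x = 1).
Proof.
  intros [g1 [Hg1 HZ]] [g2 [Hg2 HU]] HZU.
  set (s := fun y => Rabs (g1 y) + Rabs (g2 y)).
  assert (Hs : forall x, s x <> 0).
  { intro x. unfold s. pose proof (Rabs_pos (g1 x)). pose proof (Rabs_pos (g2 x)).
    destruct (Req_dec (g1 x) 0) as [E|NE].
    - assert (g2 x <> 0) by (apply HU, HZU, HZ; exact E).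
      pose proof (Rabs_pos_lt (g2 x) H1). lra.
    - pose proof (Rabs_pos_lt (g1 x) NE). lra. }
  assert (Hq : continuous X (fun y => Rabs (g1 y) * / s y)).
  { apply continuous_mult; [apply continuous_abs; exact Hg1|].
    apply continuous_inv; [|exact Hs].
    apply continuous_plus; apply continuous_abs; assumption. }
  (* |g1| / (|g1| + |g2|) vanishes on Z and equals 1 where g2 = 0 *)
  exists (exist _ _ Hq); simpl; split.
  - intros x Zx. rewrite (proj1 (HZ x) Zx), Rabs_R0. ring.
  - intros x nUx. assert (E : g2 x = 0) by (apply NNPP; intro; apply nUx, HU; auto).
    unfold s. rewrite E, Rabs_R0, Rplus_0_r. apply Rinv_r.
    apply Rabs_no_R0. intro E1. apply nUx, HZU, HZ; exact E1.
Qed.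

End Continuity.

Section PointwiseTopology.

Variable X : TopSpace.

Definition zero_fun : CX X := exist _ (fun _ => 0) (continuous_const X 0).

Definition near_set (f h : CX X) (r : R) : X -> Prop :=
  fun x => Rabs (proj1_sig h x - proj1_sig f x) < r.

Lemma basic_nbhd_open (f : CX X) (l : list X) (eps : R) :
  cp_open X (basic_nbhd X f l eps).
Proof.
  intros g Hg.
  destruct (list_lower_bound l (fun x => eps - Rabs (proj1_sig g x - proj1_sig f x)))
    as [d [Hd Hdl]].
  { intros x Hx. specialize (Hg x Hx). lra. }
  exists l, d; split; [exact Hd|].
  intros h Hh x Hx. specialize (Hh x Hx). specialize (Hdl x Hx).
  pose proof (Rabs_triang (proj1_sig h x - proj1_sig g x) (proj1_sig g x - proj1_sig f x)).
  replace (proj1_sig h x - proj1_sig g x + (proj1_sig g x - proj1_sig f x))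
    with (proj1_sig h x - proj1_sig f x) in H by ring.
  lra.
Qed.

Lemma basic_nbhd_center (f : CX X) (l : list X) (eps : R) :
  0 < eps -> basic_nbhd X f l eps f.
Proof. intros He x _. rewrite Rminus_diag, Rabs_R0. exact He. Qed.

Lemma in_closure_Cp (B : CX X -> Prop) (f : CX X) :
  in_closure (Cp X) B f <->
  forall l eps, 0 < eps -> exists h, B h /\ basic_nbhd X f l eps h.
Proof.
  split.
  - intros Hcl l eps He.
    destruct (Hcl (basic_nbhd X f l eps)) as [h [Hh Bh]].
    + apply basic_nbhd_open.
    + apply basic_nbhd_center; exact He.
    + exists h; auto.
  - intros Happrox W HW Wf. change (cp_open X W) in HW.
    destruct (HW f Wf) as [l [eps [He HlW]]].
    destruct (Happrox l eps He) as [h [Bh Hh]]. exists h; auto.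
Qed.

Lemma Gamma_pt_far_finite (f : CX X) (A : CX X -> Prop) (x : X) (r : R) :
  Gamma_pt (Cp X) f A -> 0 < r -> finite_set (fun h => A h /\ ~ near_set f h r x).
Proof.
  intros [_ [_ Hconv]] Hr.
  apply (finite_subset _ _ ) with
    (2 := Hconv (basic_nbhd X f (x :: nil) r) (basic_nbhd_open f _ r)
                (basic_nbhd_center f _ r Hr)).
  intros h [Ah Hfar]; split; [exact Ah|].
  intro Hh. apply Hfar, Hh. left; reflexivity.
Qed.

Lemma gamma_cover_intro (C : (X -> Prop) -> Prop) :
  infinite_set C -> (forall x, finite_set (fun U => C U /\ ~ U x)) ->
  (forall U, C U -> exists x, ~ U x) -> gamma_cover X C.
Proof.
  intros Cinf Cfin Cproper. split; [split|split; assumption].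
  - intro x. destruct (infinite_diff_finite _ _ Cinf (Cfin x)) as [U [CU HU]].
    exists U; split; [exact CU|]. apply NNPP; intro nUx; apply HU; auto.
  - intros [U [CU Hall]]. destruct (Cproper U CU) as [x nUx]. exact (nUx (Hall x)).
Qed.

Lemma gamma_cover_proper (C : (X -> Prop) -> Prop) (U : X -> Prop) :
  gamma_cover X C -> C U -> exists x, ~ U x.
Proof.
  intros [[_ Hproper] _] CU. apply NNPP; intro N. apply Hproper.
  exists U; split; [exact CU|]. intro x; apply NNPP; intro nUx; apply N; eauto.
Qed.

Lemma Omega_cov_intro (W : (X -> Prop) -> Prop) :
  (forall l : list X, exists U, W U /\ forall x, In x l -> U x) ->
  (forall U, W U -> exists x, ~ U x) -> (forall U, W U -> is_open U) ->
  Omega_cov X W.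
Proof.
  intros Womega Wproper Wopen. split; [split; [split|exact Womega]|exact Wopen].
  - intro x. destruct (Womega (x :: nil)) as [U [WU HU]].
    exists U; split; [exact WU|apply HU; left; reflexivity].
  - intros [U [WU Hall]]. destruct (Wproper U WU) as [x nUx]. exact (nUx (Hall x)).
Qed.

End PointwiseTopology.

Section CpToX.

Variable X : TopSpace.

Lemma Gamma_zero_of_gamma_cover (Zs : (X -> Prop) -> Prop) (s : (X -> Prop) -> CX X) :
  gamma_cover X Zs ->
  (forall Z, Zs Z -> forall x, Z x -> proj1_sig (s Z) x = 0) ->
  (forall Z, Zs Z -> exists x, proj1_sig (s Z) x <> 0) ->
  Gamma_pt (Cp X) (zero_fun X) (fun h => exists Z, Zs Z /\ h = s Z).
Proof.
  intros [_ [Zinf Zfin]] Hzero Hnz.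
  assert (Hsupp : forall x, finite_set (fun Z => Zs Z /\ proj1_sig (s Z) x <> 0)).
  { intro x. apply (finite_subset _ _) with (2 := Zfin x).
    intros Z [HZ Hx]; split; [exact HZ|]. intro Zx; exact (Hx (Hzero Z HZ x Zx)). }
  split; [|split].
  - apply (infinite_image Zs s (fun x h => proj1_sig h x <> 0)); assumption.
  - intros [Z [HZ E]]. destruct (Hnz Z HZ) as [x Hx]. apply Hx. rewrite <- E. reflexivity.
  - intros W HW W0. change (cp_open X W) in HW.
    destruct (HW _ W0) as [l [eps [He HlW]]].
    apply (finite_image _ (fun Z => exists x, In x l /\ (Zs Z /\ proj1_sig (s Z) x <> 0)) s).
    + apply finite_list_union; intros x _; apply Hsupp.
    + intros h [[Z [HZ ->]] nW]. exists Z; split; [|reflexivity].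
      apply NNPP; intro Hsmall. apply nW, HlW. intros x Hx; simpl.
      assert (E : proj1_sig (s Z) x = 0) by (apply NNPP; intro; apply Hsmall; eauto).
      rewrite E, Rminus_0_r, Rabs_R0. exact He.
Qed.

Lemma Gamma_F_transfer (C : (X -> Prop) -> Prop) :
  Gamma_F X C ->
  exists (A : CX X -> Prop) (u : CX X -> X -> Prop),
    Gamma_pt (Cp X) (zero_fun X) A /\
    forall h, A h -> C (u h) /\ forall x, ~ u h x -> proj1_sig h x = 1.
Proof.
  intros [HC [Hcoz [F [HF HFcov]]]].
  set (Zs := fun Z => exists U, C U /\ Z = F U).
  destruct (choice_on (fun _ : X => True) Zs (fun Z U => C U /\ Z = F U)) as [w Hw].
  { intros Z HZ; exact HZ. }
  destruct (choice_on (zero_fun X) Zs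
              (fun Z h => (forall x, Z x -> proj1_sig h x = 0) /\
                          (forall x, ~ w Z x -> proj1_sig h x = 1))) as [s Hs].
  { intros Z HZ. destruct (Hw Z HZ) as [CU EZ]. destruct (HF _ CU) as [Zzero ZU].
    destruct (zero_cozero_separation X _ _ Zzero (Hcoz _ CU) ZU) as [h [h0 h1]].
    exists h. split; [rewrite EZ; exact h0|exact h1]. }
  set (A := fun h => exists Z, Zs Z /\ h = s Z).
  destruct (choice_on (fun _ : X => True) A (fun h Z => Zs Z /\ h = s Z)) as [z Hz].
  { intros h Ah; exact Ah. }
  exists A, (fun h => w (z h)). split.
  - apply Gamma_zero_of_gamma_cover; [exact HFcov|apply Hs|].
    intros Z HZ. destruct (gamma_cover_proper X C (w Z) HC (proj1 (Hw Z HZ))) as [x nx].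
    exists x. rewrite (proj2 (Hs Z HZ) x nx). lra.
  - intros h Ah. destruct (Hz h Ah) as [HZ E]. split; [apply (Hw _ HZ)|].
    intros x nx. rewrite E. exact (proj2 (Hs _ HZ) x nx).
Qed.

Lemma S_fin_Gamma_F_of_Cp :
  (forall f : Cp X, S_fin (Gamma_pt (Cp X) f) (Omega_pt (Cp X) f)) ->
  S_fin (Gamma_F X) (Omega_cov X).
Proof.
  intros Hsel C HC.
  destruct (choice (fun n (p : (CX X -> Prop) * (CX X -> X -> Prop)) =>
      Gamma_pt (Cp X) (zero_fun X) (fst p) /\
      forall h, fst p h -> C n (snd p h) /\ forall x, ~ snd p h x -> proj1_sig h x = 1))
    as [p Hp].
  { intro n. destruct (Gamma_F_transfer _ (HC n)) as [A [u Hu]]. exists (A, u); exact Hu. }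
  destruct (Hsel (zero_fun X) (fun n => fst (p n)) (fun n => proj1 (Hp n)))
    as [Bs [HBs [Hcl _]]].
  assert (HB : forall n h, Bs n h ->
            C n (snd (p n) h) /\ forall x, ~ snd (p n) h x -> proj1_sig h x = 1).
  { intros n h Bh. apply (proj2 (Hp n)), HBs, Bh. }
  exists (fun n U => exists h, Bs n h /\ U = snd (p n) h). split.
  - intro n. split.
    + apply (finite_image _ (Bs n) (snd (p n))); [apply HBs|].
      intros U [h [Bh ->]]; eauto.
    + intros U [h [Bh ->]]. apply (HB n h Bh).
  - apply Omega_cov_intro.
    + intro l. destruct (proj1 (in_closure_Cp X _ _) Hcl l 1 Rlt_0_1) as [h [[n Bh] Hh]].
      exists (snd (p n) h). split; [eauto|].
      intros x Hx. apply NNPP; intro nx. specialize (Hh x Hx).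
      rewrite (proj2 (HB n h Bh) x nx) in Hh. simpl in Hh.
      rewrite Rminus_0_r, Rabs_R1 in Hh. lra.
    + intros U [n [h [Bh ->]]]. exact (gamma_cover_proper X _ _ (proj1 (HC n)) (proj1 (HB n h Bh))).
    + intros U [n [h [Bh ->]]]. apply cozero_set_open, (proj1 (proj2 (HC n))), (HB n h Bh).
Qed.

End CpToX.

Section XToCp.

Variable X : TopSpace.

Lemma near_set_cozero (f h : CX X) (r : R) : cozero_set X (near_set X f h r).
Proof.
  exists (fun x => Rmax 0 (r - Rabs (proj1_sig h x - proj1_sig f x))). split.
  - apply (continuous_lipschitz2 X (proj1_sig h) (proj1_sig f));
      [apply (proj2_sig h)|apply (proj2_sig f)|].
    intros x y. unfold Rmax, Rabs; repeat (destruct Rle_dec || destruct Rcase_abs); lra.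
  - intro x. unfold near_set, Rmax. destruct Rle_dec; split; intro; lra.
Qed.

Lemma closed_near_zero (f h : CX X) (r : R) :
  zero_set X (fun x => Rabs (proj1_sig h x - proj1_sig f x) <= r).
Proof.
  exists (fun x => Rmax 0 (Rabs (proj1_sig h x - proj1_sig f x) - r)). split.
  - apply (continuous_lipschitz2 X (proj1_sig h) (proj1_sig f));
      [apply (proj2_sig h)|apply (proj2_sig f)|].
    intros x y. unfold Rmax, Rabs; repeat (destruct Rle_dec || destruct Rcase_abs); lra.
  - intro x. unfold Rmax. destruct Rle_dec; split; intro; lra.
Qed.

Lemma Gamma_F_of_far_family (f : CX X) (A : CX X -> Prop) (r : R) :
  0 < r -> Gamma_pt (Cp X) f A ->
  (forall h, A h -> exists x, ~ near_set X f h r x) ->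
  Gamma_F X (fun U => exists h, A h /\ U = near_set X f h r).
Proof.
  intros Hr HA Hfar.
  set (C := fun U => exists h, A h /\ U = near_set X f h r).
  destruct (choice_on f C (fun U h => A h /\ U = near_set X f h r)) as [hp Hhp].
  { intros U CU; exact CU. }
  set (F := fun U x => Rabs (proj1_sig (hp U) x - proj1_sig f x) <= r / 2).
  assert (FU : forall U, C U -> forall x, F U x -> U x).
  { intros U CU x Fx. rewrite (proj2 (Hhp U CU)). unfold F, near_set in *. lra. }
  assert (Cproper : forall U, C U -> exists x, ~ U x) by (intros U [h [Ah ->]]; auto).
  assert (Cfin : forall x, finite_set (fun U => C U /\ ~ U x)).
  { intro x. apply (finite_image _ _ (fun h => near_set X f h r))
      with (1 := Gamma_pt_far_finite X f A x r HA Hr).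
    intros U [[h [Ah ->]] nU]. exists h; auto. }
  assert (Cinf : infinite_set C).
  { apply (infinite_image A (fun h => near_set X f h r) (fun x U => ~ U x));
      [apply HA|exact Hfar|].
    intro x. exact (Gamma_pt_far_finite X f A x r HA Hr). }
  assert (Ffin : forall x, finite_set (fun U => C U /\ ~ F U x)).
  { intro x. apply (finite_image _ _ (fun h => near_set X f h r))
      with (1 := Gamma_pt_far_finite X f A x (r / 2) HA ltac:(lra)).
    intros U [CU nFU]. destruct (Hhp U CU) as [Ah EU].
    exists (hp U); split; [split; [exact Ah|]|exact EU].
    unfold near_set, F in *. lra. }
  assert (Fproper : forall U, C U -> exists x, ~ F U x).
  { intros U CU. destruct (Cproper U CU) as [x nUx].
    exists x. intro Fx. exact (nUx (FU U CU x Fx)). }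
  split; [|split].
  - apply gamma_cover_intro; assumption.
  - intros U [h [_ ->]]. apply near_set_cozero.
  - exists F. split.
    + intros U CU. split; [apply closed_near_zero|exact (FU U CU)].
    + apply gamma_cover_intro.
      * exact (infinite_image C F (fun x V => ~ V x) Cinf Fproper Ffin).
      * intro x. apply (finite_image _ _ F) with (1 := Ffin x).
        intros V [[U [CU ->]] nV]. exists U; auto.
      * intros V [U [CU ->]]. exact (Fproper U CU).
Qed.

Lemma Cp_select_uniform (f : CX X) (A : nat -> CX X -> Prop) :
  (forall n, ~ A n f) ->
  (forall N, exists n, (N <= n)%nat /\
     exists h, A n h /\ forall x, near_set X f h (recip_succ n) x) ->
  exists Bs : nat -> CX X -> Prop,
    (forall n, finite_set (Bs n) /\ forall h, Bs n h -> A n h) /\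
    Omega_pt (Cp X) f (fun h => exists n, Bs n h).
Proof.
  intros Hf Hoften.
  set (D := fun n h => A n h /\ forall x, near_set X f h (recip_succ n) x).
  destruct (choice_on f (fun n => exists h, D n h) D) as [g Hg]; [auto|].
  exists (fun n h => D n h /\ h = g n). split.
  - intro n. split.
    + exists (g n :: nil). intros h [_ ->]. left; reflexivity.
    + intros h [[Ah _] _]; exact Ah.
  - split.
    + apply in_closure_Cp. intros l eps He.
      destruct (recip_succ_lt eps He) as [N HN].
      destruct (Hoften N) as [n [Hn Dn]].
      exists (g n). split; [exists n; split; [exact (Hg n Dn)|reflexivity]|].
      intros x _. pose proof (proj2 (Hg n Dn) x). pose proof (recip_succ_antitone N n Hn).
      unfold near_set in *. lra.
    + intros [n [[An _] _]]. exact (Hf n An).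
Qed.

Lemma Cp_select_far (f : CX X) (A : nat -> CX X -> Prop) (M : nat) :
  S_fin (Gamma_F X) (Omega_cov X) ->
  (forall n, Gamma_pt (Cp X) f (A n)) ->
  (forall n, (M <= n)%nat -> forall h, A n h -> exists x, ~ near_set X f h (recip_succ n) x) ->
  exists Bs : nat -> CX X -> Prop,
    (forall n, finite_set (Bs n) /\ forall h, Bs n h -> A n h) /\
    Omega_pt (Cp X) f (fun h => exists n, Bs n h).
Proof.
  intros Hsel HA Hfar.
  set (C := fun k U => exists h, A (k + M)%nat h /\ U = near_set X f h (recip_succ (k + M))).
  assert (HC : forall k, Gamma_F X (C k)).
  { intro k. apply Gamma_F_of_far_family; [apply recip_succ_pos|apply HA|].
    apply Hfar; lia. }
  assert (Cproper : forall k U, C k U -> exists x, ~ U x).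
  { intros k U CU. exact (gamma_cover_proper X _ U (proj1 (HC k)) CU). }
  destruct (Hsel C HC) as [V [HV [[_ Vomega] _]]].
  exists (fun n h => A n h /\ exists k, (k + M)%nat = n /\ V k (near_set X f h (recip_succ n))).
  split.
  - intro n. split; [|intros h [Ah _]; exact Ah].
    apply (finite_subset _ (fun h => A n h /\ V (n - M)%nat (near_set X f h (recip_succ n)))).
    { intros h [Ah [k [Hk Vk]]]. split; [exact Ah|]. replace (n - M)%nat with k by lia. exact Vk. }
    apply (finite_preimage (A n) (fun h => near_set X f h (recip_succ n)) (fun x U => ~ U x)).
    + apply HV.
    + intros U VU. exact (Cproper _ U (proj2 (HV _) U VU)).
    + intro x. exact (Gamma_pt_far_finite X f (A n) x _ (HA n) (recip_succ_pos n)).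
  - split.
    + apply in_closure_Cp. intros l eps He.
      destruct (recip_succ_lt eps He) as [N HN].
      destruct (omega_family_tail V (fun k => proj1 (HV k))
                  (fun k U VU => Cproper k U (proj2 (HV k) U VU)) Vomega N l)
        as [k [U [Hk [VU HlU]]]].
      destruct (proj2 (HV k) U VU) as [h [Ah EU]].
      exists h. split; [exists (k + M)%nat; split; [exact Ah|exists k; split; [reflexivity|]]|].
      * rewrite <- EU; exact VU.
      * intros x Hx. pose proof (HlU x Hx) as Hnear. rewrite EU in Hnear.
        pose proof (recip_succ_antitone N (k + M) ltac:(lia)). unfold near_set in Hnear. lra.
    + intros [n [An _]]. exact (proj1 (proj2 (HA n)) An).
Qed.

Lemma S_fin_Cp_of_Gamma_F :
  S_fin (Gamma_F X) (Omega_cov X) ->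
  forall f : Cp X, S_fin (Gamma_pt (Cp X) f) (Omega_pt (Cp X) f).
Proof.
  intros Hsel f A HA.
  destruct (classic (forall N, exists n, (N <= n)%nat /\
              exists h, A n h /\ forall x, near_set X f h (recip_succ n) x))
    as [Hoften|Hrare].
  - apply Cp_select_uniform; [intro n; apply (HA n)|exact Hoften].
  - apply not_all_ex_not in Hrare as [M HM].
    apply (Cp_select_far f A M Hsel HA). intros n Hn h Ah.
    apply not_all_ex_not. intro Hnear. apply HM. exists n. split; [exact Hn|eauto].
Qed.

End XToCp.

Theorem mainTheorem7 (X : TopSpace) (HX : tychonoff X) :
  (forall f : Cp X, S_fin (Gamma_pt (Cp X) f) (Omega_pt (Cp X) f)) <->
  S_fin (Gamma_F X) (Omega_cov X).
Proof.
  split; [apply S_fin_Gamma_F_of_Cp|apply S_fin_Cp_of_Gamma_F].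
Qed.
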